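(* Let $k$ be a kernel on $\mathcal{X}$, $\sigma>0$, $f\in\mathcal{H}_k$, $g\in\mathcal{H}_{\sigma^2\delta}$, $h=f+g$. Let $x_1,\dots,x_t\in\mathcal{X}$ be pairwise distinct with observations $y_i=h(x_i)$, and let $\widehat x_1,\dots,\widehat x_L\in\mathcal{X}\setminus\{x_1,\dots,x_t\}$. Then $$\Big|\sum_{i=1}^L\widehat m_t(\widehat x_i)-\sum_{i=1}^L f(\widehat x_i)\Big|\le\|h\|_{\mathcal{H}_{k^\sigma}}\sqrt{\mathbf 1^T\mathbf{A}\mathbf 1+L^2\sigma^2}+L\|g\|_{\mathcal{H}_{\sigma^2\delta}}\sigma,$$ where $\mathbf{A}_{ij}=k(\widehat x_i,\widehat x_j)-\mathbf{k}_t(\widehat x_i)^T(\mathbf{K}_t+\sigma^2I)^{-1}\mathbf{k}_t(\widehat x_j)$.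
   Context: $\delta(x,y)=1$ if $x=y$, else $0$; $k^\sigma=k+\sigma^2\delta$; $\mathcal{H}_{\sigma^2\delta}$ is the RKHS of $\sigma^2\delta$. $\mathbf{k}_t(x)=[k(x,x_i)]_{i\le t}$, $\mathbf{K}_t=[k(x_i,x_j)]_{i,j\le t}$, $\mathbf{y}_t=[y_i]_{i\le t}$, $\widehat m_t(x)=\mathbf{k}_t(x)^T(\mathbf{K}_t+\sigma^2I)^{-1}\mathbf{y}_t$; $\mathbf 1$ is the all-ones vector. *)

From Stdlib Require Import Reals ClassicalEpsilon FunctionalExtensionality.
From HB Require Import structures.
From mathcomp Require Import all_boot all_order all_algebra.
Set Implicit Arguments. Unset Strict Implicit. Unset Printing Implicit Defensive.
Import GRing.Theory.

Definition R_eqb (x y : R) : bool :=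
  if Req_EM_T x y then true else false.

Lemma R_eqP : Equality.axiom R_eqb.
Proof. by move=> x y; rewrite /R_eqb; case: Req_EM_T => h; constructor. Qed.

HB.instance Definition _ := hasDecEq.Build R R_eqP.

Definition R_find (P : pred R) (n : nat) : option R :=
  match excluded_middle_informative (exists x, P x) with
  | left h => Some (proj1_sig (constructive_indefinite_description _ h))
  | right _ => None
  end.

Lemma R_find_correct P n x : R_find P n = Some x -> P x.
Proof.
rewrite /R_find; case: excluded_middle_informative => // h [<-].
exact: proj2_sig (constructive_indefinite_description _ h).
Qed.

Lemma R_find_complete (P : pred R) : (exists x, P x) -> exists n, R_find P n.
Proof.
by move=> h; exists 0%N; rewrite /R_find; case: excluded_middle_informative.
Qed.

Lemma R_find_ext (P Q : pred R) : P =1 Q -> R_find P =1 R_find Q.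
Proof. by move=> /functional_extensionality ->. Qed.

HB.instance Definition _ :=
  hasChoice.Build R R_find_correct R_find_complete R_find_ext.

Lemma R_addA : associative Rplus.
Proof. by move=> x y z; rewrite Rplus_assoc. Qed.
Lemma R_addC : commutative Rplus.
Proof. exact: Rplus_comm. Qed.
Lemma R_add0 : left_id R0 Rplus.
Proof. exact: Rplus_0_l. Qed.
Lemma R_addN : left_inverse R0 Ropp Rplus.
Proof. exact: Rplus_opp_l. Qed.

HB.instance Definition _ := GRing.isZmodule.Build R R_addA R_addC R_add0 R_addN.

Lemma R_mulA : associative Rmult.
Proof. by move=> x y z; rewrite Rmult_assoc. Qed.
Lemma R_mulC : commutative Rmult.
Proof. exact: Rmult_comm. Qed.
Lemma R_mul1 : left_id R1 Rmult.
Proof. exact: Rmult_1_l. Qed.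
Lemma R_mulDl : left_distributive Rmult Rplus.
Proof. by move=> x y z; rewrite Rmult_plus_distr_r. Qed.
Lemma R_one_neq0 : R1 != R0.
Proof. by apply/eqP; exact: R1_neq_R0. Qed.

HB.instance Definition _ :=
  GRing.Zmodule_isComNzRing.Build R R_mulA R_mulC R_mul1 R_mulDl R_one_neq0.

Definition R_inv (x : R) : R := if x == R0 then R0 else Rinv x.

Lemma R_mulVf (x : R) : x != 0%R -> (R_inv x * x)%R = 1%R.
Proof.
move=> /eqP hx; rewrite /R_inv; case: eqP => // _.
exact: Rinv_l.
Qed.

Lemma R_inv0 : R_inv 0%R = 0%R.
Proof. by rewrite /R_inv eqxx. Qed.

HB.instance Definition _ := GRing.ComNzRing_isField.Build R R_mulVf R_inv0.

Local Open Scope ring_scope.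

Definition delta (X : Type) (x y : X) : R :=
  if excluded_middle_informative (x = y) then 1 else 0.

Definition is_kernel (X : Type) (k : X -> X -> R) : Prop :=
  (forall x y, k x y = k y x) /\
  (forall (n : nat) (xs : 'I_n -> X) (a : 'I_n -> R),
      Rle 0 (\sum_(i < n) \sum_(j < n) a i * a j * k (xs i) (xs j))).

Definition ksig (X : Type) (k : X -> X -> R) (sigma : R) : X -> X -> R :=
  fun x y => k x y + sigma ^+ 2 * delta x y.

Definition sdelta (X : Type) (sigma : R) : X -> X -> R :=
  fun x y => sigma ^+ 2 * delta x y.

(* Elements of the pre-Hilbert space H_0 = span{k(.,x)}: finite lists of
   (coefficient, centre) pairs  s = [(a_1,z_1);...;(a_m,z_m)]
   representing sum_i a_i k(z_i, .). *)
Definition comb_eval (X : Type) (k : X -> X -> R) (s : seq (R * X)) (x : X) : R :=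
  \sum_(p <- s) p.1 * k p.2 x.

Definition comb_sqnorm (X : Type) (k : X -> X -> R) (s : seq (R * X)) : R :=
  \sum_(p <- s) \sum_(q <- s) p.1 * q.1 * k p.2 q.2.

Definition comb_sub (X : Type) (s s' : seq (R * X)) : seq (R * X) :=
  s ++ [seq (- p.1, p.2) | p <- s'].

(* [rkhs_norm_is k f r] : f belongs to the RKHS H_k (the completion of H_0)
   and ||f||_{H_k} = r. *)
Definition rkhs_norm_is (X : Type) (k : X -> X -> R) (f : X -> R) (r : R) : Prop :=
  exists s : nat -> seq (R * X),
    (forall eps : R, Rlt 0 eps -> exists N : nat, forall n m : nat,
        (N <= n)%N -> (N <= m)%N ->
        Rlt (sqrt (comb_sqnorm k (comb_sub (s n) (s m)))) eps) /\
    (forall x : X, Un_cv (fun n => comb_eval k (s n) x) (f x)) /\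
    Un_cv (fun n => sqrt (comb_sqnorm k (s n))) r.

Definition in_rkhs (X : Type) (k : X -> X -> R) (f : X -> R) : Prop :=
  exists r : R, rkhs_norm_is k f r.

Definition Kmat (X : Type) (k : X -> X -> R) (t : nat) (xs : 'I_t -> X) : 'M[R]_t :=
  \matrix_(i, j) k (xs i) (xs j).

Definition kvec (X : Type) (k : X -> X -> R) (t : nat) (xs : 'I_t -> X) (x : X)
  : 'cV[R]_t := \col_i k x (xs i).

Definition post_mean (X : Type) (k : X -> X -> R) (sigma : R) (t : nat)
  (xs : 'I_t -> X) (y : 'cV[R]_t) (x : X) : R :=
  ((kvec k xs x)^T *m invmx (Kmat k xs + (sigma ^+ 2)%:M) *m y) ord0 ord0.

Definition post_cov (X : Type) (k : X -> X -> R) (sigma : R) (t : nat)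
  (xs : 'I_t -> X) (x x' : X) : R :=
  k x x' - ((kvec k xs x)^T *m invmx (Kmat k xs + (sigma ^+ 2)%:M) *m kvec k xs x')
             ord0 ord0.

From Stdlib Require Import Reals Lra FunctionalExtensionality ClassicalEpsilon.
From HB Require Import structures.
From mathcomp Require Import all_boot all_order all_algebra ring.
Import GRing.Theory.
Set Implicit Arguments. Unset Strict Implicit.
Local Open Scope ring_scope.

(* With w = (sum_i k_t(xh_i))^T (K_t + sigma^2 I)^{-1}, the
   summed posterior mean is sum_j w_j h(x_j), so the error is
     sum_i m_t(xh_i) - sum_i f(xh_i) = sum_i g(xh_i) - <h, v>,
   where v = sum_i k^sigma(xh_i, .) - sum_j w_j k^sigma(x_j, .) is a finite
   combination in the RKHS of k^sigma = k + sigma^2 delta.  Since the x_j are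
   distinct and the xh_i are new, the Gram matrix of k^sigma on the x_j is
   K_t + sigma^2 I and k^sigma = k between xh and x; hence
   ||v||^2 = sum_{i,i'} k^sigma(xh_i, xh_i') - w . sum_i k_t(xh_i)
          <= 1^T A 1 + L^2 sigma^2.
   The reproducing bound |<h, v>| <= ||h|| ||v|| (Cauchy--Schwarz on finite
   combinations, passed to the limit defining the RKHS norm) and
   |g(x)| <= ||g|| sigma in the RKHS of sigma^2 delta conclude. *)

(* The MathComp ring operations on [R] are Stdlib's; these equations expose
   them to [lra] and to the Stdlib lemmas on [Rle]. *)
Lemma addRE (x y : R) : x + y = Rplus x y. Proof. by []. Qed.
Lemma mulRE (x y : R) : x * y = Rmult x y. Proof. by []. Qed.
Lemma oppRE (x : R) : - x = Ropp x. Proof. by []. Qed.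

Lemma Rle_sum (I : Type) (r : seq I) (F G : I -> R) :
  (forall i, Rle (F i) (G i)) -> Rle (\sum_(i <- r) F i) (\sum_(i <- r) G i).
Proof.
move=> FG; apply: (big_ind2 Rle) => //; first exact: Rle_refl.
by move=> a b c d ab cd; rewrite !addRE; apply: Rplus_le_compat.
Qed.

Lemma sum_ge0 (I : Type) (r : seq I) (F : I -> R) :
  (forall i, Rle 0 (F i)) -> Rle 0 (\sum_(i <- r) F i).
Proof.
move=> F0; apply: (big_ind (Rle 0)) => //; first exact: Rle_refl.
by move=> a b a0 b0; rewrite addRE; apply: Rplus_le_le_0_compat.
Qed.

Lemma Rabs_sum (I : Type) (r : seq I) (F : I -> R) :
  Rle (Rabs (\sum_(i <- r) F i)) (\sum_(i <- r) Rabs (F i)).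
Proof.
elim: r => [|a r IH]; first by rewrite !big_nil Rabs_R0; apply: Rle_refl.
rewrite !big_cons !addRE; apply: Rle_trans (Rabs_triang _ _) _.
exact: Rplus_le_compat_l.
Qed.

Lemma sum_const_ord (n : nat) (c : R) : \sum_(i < n) c = Rmult n%:R c.
Proof. by rewrite sumr_const card_ord; exact: (esym (mulr_natl c n)). Qed.

Lemma cv_const (c : R) : Un_cv (fun _ => c) c.
Proof. by move=> e he; exists 0%N => n _; rewrite /R_dist Rminus_diag Rabs_R0. Qed.

Lemma cv_sum (I : Type) (r : seq I) (F : nat -> I -> R) (l : I -> R) :
  (forall i, Un_cv (fun n => F n i) (l i)) ->
  Un_cv (fun n => \sum_(i <- r) F n i) (\sum_(i <- r) l i).
Proof.
move=> Fl; elim: r => [|a r IH].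
  have -> : (fun n => \sum_(i <- [::]) F n i) = fun _ => 0.
    by apply: functional_extensionality => n; rewrite big_nil.
  by rewrite big_nil; exact: cv_const.
have -> : (fun n => \sum_(i <- a :: r) F n i) =
          fun n => Rplus (F n a) (\sum_(i <- r) F n i).
  by apply: functional_extensionality => n; rewrite big_cons.
by rewrite big_cons; exact: CV_plus.
Qed.

Local Open Scope R_scope.
Lemma quadratic_discriminant (a b c : R) :
  (forall u v, 0 <= u * u * a + u * v * b + u * v * b + v * v * c) -> b * b <= a * c.
Proof.
move=> q; have := q 1 0; have := q 0 1; have := q (- b) a.
move=> h c0 a0; case: (Rle_lt_or_eq_dec 0 a ltac:(lra)) => [apos|a0E].
- nra.
- subst a; have := q (- (c + 1)) b; nra.
Qed.
Local Close Scope R_scope.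

(* Finite combinations [s = [(a_1, z_1); ...; (a_m, z_m)]] stand for
   [sum_i a_i K(z_i, .)]; [bform K s u] is their pairing
   [sum_{i,j} a_i b_j K(z_i, w_j)], so that [comb_sqnorm K s = bform K s s]. *)
Section FiniteCombinations.
Variables (X : Type) (K : X -> X -> R).

Definition bform (s u : seq (R * X)) : R :=
  \sum_(p <- s) \sum_(q <- u) p.1 * q.1 * K p.2 q.2.

Definition kernel_symmetric : Prop := forall x y, K x y = K y x.

Definition kernel_psd : Prop := forall s, Rle 0 (bform s s).

Definition scale_comb (l : R) (s : seq (R * X)) : seq (R * X) :=
  [seq (l * p.1, p.2) | p <- s].

Lemma bform_catl (s1 s2 u : seq (R * X)) :
  bform (s1 ++ s2) u = bform s1 u + bform s2 u.
Proof. by rewrite /bform big_cat. Qed.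

Lemma bform_catr (s u1 u2 : seq (R * X)) :
  bform s (u1 ++ u2) = bform s u1 + bform s u2.
Proof. by rewrite /bform -big_split; apply: eq_bigr => p _; rewrite big_cat. Qed.

Lemma bform_scale (l m : R) (s u : seq (R * X)) :
  bform (scale_comb l s) (scale_comb m u) = l * m * bform s u.
Proof.
rewrite /bform big_map mulr_sumr; apply: eq_bigr => p _.
rewrite big_map mulr_sumr; apply: eq_bigr => q _ /=; ring.
Qed.

Lemma bform_sym (s u : seq (R * X)) : kernel_symmetric -> bform s u = bform u s.
Proof.
move=> symK; rewrite /bform exchange_big; apply: eq_bigr => p _.
by apply: eq_bigr => q _; rewrite symK; ring.
Qed.

Lemma bform_eval (s v : seq (R * X)) :
  bform s v = \sum_(q <- v) q.1 * comb_eval K s q.2.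
Proof.
rewrite /bform exchange_big; apply: eq_bigr => q _; rewrite /comb_eval mulr_sumr.
by apply: eq_bigr => p _; ring.
Qed.

Lemma rkhs_norm_ge0 (h : X -> R) (r : R) : rkhs_norm_is K h r -> Rle 0 r.
Proof.
case=> s [_ [_ norm_cv]].
by apply: (Rle_cv_lim _ (cv_const 0) norm_cv) => n; apply: sqrt_pos.
Qed.

Hypotheses (symK : kernel_symmetric) (psdK : kernel_psd).

Lemma cauchy_schwarz (s u : seq (R * X)) :
  Rle (Rabs (bform s u)) (sqrt (bform s s) * sqrt (bform u u)).
Proof.
rewrite -sqrt_mult ?psdK // -sqrt_Rsqr_abs; apply: sqrt_le_1_alt; rewrite /Rsqr.
apply: quadratic_discriminant => l m.
have := psdK (scale_comb l s ++ scale_comb m u).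
by rewrite !bform_catl !bform_catr !bform_scale (bform_sym u s symK) (mulrC m l) addrA.
Qed.

Lemma rkhs_eval_bound (h : X -> R) (r : R) (v : seq (R * X)) :
  rkhs_norm_is K h r ->
  Rle (Rabs (\sum_(q <- v) q.1 * h q.2)) (r * sqrt (bform v v)).
Proof.
move=> [s [_ [eval_cv norm_cv]]].
set c := sqrt (bform v v).
have pair_cv : Un_cv (fun n => bform (s n) v) (\sum_(q <- v) q.1 * h q.2).
  rewrite (functional_extensionality _ _ (fun n => bform_eval (s n) v)).
  by apply: cv_sum => q; apply: CV_mult (cv_const _) (eval_cv q.2).
have bound_cv : Un_cv (fun n => Rmult (sqrt (comb_sqnorm K (s n))) c) (Rmult r c).
  exact: CV_mult norm_cv (cv_const _).
have pair_le n : Rle (Rabs (bform (s n) v)) (Rmult (sqrt (comb_sqnorm K (s n))) c).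
  exact: cauchy_schwarz.
apply: Rabs_le; split.
- apply: (Rle_cv_lim _ (CV_opp _ _ bound_cv) pair_cv) => n.
  have := pair_le n; have := Rle_abs (Ropp (bform (s n) v)).
  rewrite /opp_seq Rabs_Ropp; lra.
- apply: (Rle_cv_lim _ pair_cv bound_cv) => n.
  exact: Rle_trans (Rle_abs _) (pair_le n).
Qed.

End FiniteCombinations.

Lemma kernel_psd_of_families (X : Type) (K : X -> X -> R) :
  (forall (n : nat) (xs : 'I_n -> X) (a : 'I_n -> R),
      Rle 0 (\sum_(i < n) \sum_(j < n) a i * a j * K (xs i) (xs j))) ->
  kernel_psd K.
Proof.
move=> psd_fam [|p s]; first by rewrite /bform big_nil; apply: Rle_refl.
rewrite /bform (big_nth p) big_mkord.
under eq_bigr do rewrite (big_nth p) big_mkord.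
exact: psd_fam.
Qed.

(* The kernel [(x, y) |-> [c x == c y]] is positive semidefinite: its
   quadratic form is the sum over the values [l] of [(sum_{c i = l} a_i)^2]. *)
Lemma indicator_quad_ge0 (T : finType) (n : nat) (c : 'I_n -> T) (a : 'I_n -> R) :
  Rle 0 (\sum_(i < n) \sum_(j < n) a i * a j * (c i == c j)%:R).
Proof.
have -> : \sum_(i < n) \sum_(j < n) a i * a j * (c i == c j)%:R =
          \sum_(l : T) (\sum_(i < n) a i * (c i == l)%:R) ^+ 2.
  under [RHS]eq_bigr do rewrite expr2 mulr_suml; rewrite [RHS]exchange_big.
  apply: eq_bigr => i _.
  under [RHS]eq_bigr do rewrite mulr_sumr; rewrite [RHS]exchange_big.
  apply: eq_bigr => j _; rewrite (bigD1 (c i)) //= big1 => [|l /negbTE nl].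
    by rewrite !eqxx addr0 [c j == _]eq_sym mulr1n; ring.
  by rewrite eq_sym nl mulr0n mulr0 mul0r.
by apply: sum_ge0 => l; rewrite expr2; apply: Rle_0_sqr.
Qed.

Section DiracKernel.
Variable X : Type.

Lemma delta_eq (x y : X) : x = y -> delta x y = 1.
Proof. by rewrite /delta; case: excluded_middle_informative. Qed.

Lemma delta_neq (x y : X) : x <> y -> delta x y = 0.
Proof. by rewrite /delta; case: excluded_middle_informative. Qed.

Lemma delta_sym : kernel_symmetric (@delta X).
Proof.
move=> x y; case: (excluded_middle_informative (x = y)) => [->//|nxy].
by rewrite !delta_neq // => /esym.
Qed.

(* [delta] on a family [z] is the indicator kernel of a choice of
   representative index for each value of [z]. *)
Lemma delta_quad_ge0 (n : nat) (z : 'I_n -> X) (a : 'I_n -> R) :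
  Rle 0 (\sum_(i < n) \sum_(j < n) a i * a j * delta (z i) (z j)).
Proof.
pose rep i := odflt i [pick j | delta (z j) (z i) == 1].
have z_rep i : z (rep i) = z i.
  rewrite /rep; case: pickP => [j /eqP|/(_ i)]; last by rewrite delta_eq ?eqxx.
  by case: (excluded_middle_informative (z j = z i)) => // /delta_neq -> /esym/eqP;
     rewrite oner_eq0.
have rep_eq i j : z i = z j -> rep i = rep j.
  by move=> zij; rewrite /rep zij; case: pickP => // /(_ j); rewrite delta_eq ?eqxx.
have -> : \sum_(i < n) \sum_(j < n) a i * a j * delta (z i) (z j) =
          \sum_(i < n) \sum_(j < n) a i * a j * (rep i == rep j)%:R.
  apply: eq_bigr => i _; apply: eq_bigr => j _; congr (_ * _).
  case: (excluded_middle_informative (z i = z j)) => zij.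
    by rewrite delta_eq // (rep_eq _ _ zij) eqxx.
  rewrite delta_neq //; case: eqP => // rij; case: zij.
  by rewrite -z_rep rij z_rep.
exact: indicator_quad_ge0.
Qed.

Lemma delta_psd : kernel_psd (@delta X).
Proof. exact/kernel_psd_of_families/delta_quad_ge0. Qed.

Lemma delta_sum_le (n : nat) (z : 'I_n -> X) :
  Rle (\sum_(i < n) \sum_(j < n) delta (z i) (z j)) (Rmult n%:R n%:R).
Proof.
rewrite -sum_const_ord; apply: Rle_sum => i.
rewrite -[X in Rle _ X]Rmult_1_r -sum_const_ord; apply: Rle_sum => j.
rewrite /delta; case: excluded_middle_informative => ?; [apply: Rle_refl | apply: Rle_0_1].
Qed.

End DiracKernel.

Section RegularizedKernel.
Variables (X : Type) (k : X -> X -> R) (sigma : R).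

Lemma bform_sdelta (s u : seq (R * X)) :
  bform (sdelta sigma) s u = sigma ^+ 2 * bform (@delta X) s u.
Proof.
rewrite /bform mulr_sumr; apply: eq_bigr => p _; rewrite mulr_sumr.
by apply: eq_bigr => q _; rewrite /sdelta; ring.
Qed.

Lemma bform_ksig (s u : seq (R * X)) :
  bform (ksig k sigma) s u = bform k s u + bform (sdelta sigma) s u.
Proof.
rewrite /bform -big_split; apply: eq_bigr => p _; rewrite -big_split.
by apply: eq_bigr => q _; rewrite /ksig /sdelta /=; ring.
Qed.

Lemma sdelta_symmetric : kernel_symmetric (@sdelta X sigma).
Proof. by move=> x y; rewrite /sdelta delta_sym. Qed.

Lemma sdelta_psd : kernel_psd (@sdelta X sigma).
Proof.
move=> s; rewrite bform_sdelta expr2 !mulRE.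
exact: Rmult_le_pos (Rle_0_sqr _) (delta_psd s).
Qed.

Lemma ksig_symmetric : is_kernel k -> kernel_symmetric (ksig k sigma).
Proof. by case=> symk _ x y; rewrite /ksig symk delta_sym. Qed.

Lemma ksig_psd : is_kernel k -> kernel_psd (ksig k sigma).
Proof.
case=> _ psdk s; rewrite bform_ksig addRE.
exact: Rplus_le_le_0_compat (kernel_psd_of_families psdk s) (sdelta_psd s).
Qed.

(* Point evaluations in the RKHS of [sigma^2 delta] are bounded by
   [sigma] times the norm, since [||sigma^2 delta(x, .)|| = sigma]. *)
Lemma sdelta_eval_bound (g : X -> R) (r : R) (x : X) : Rle 0 sigma ->
  rkhs_norm_is (sdelta sigma) g r -> Rle (Rabs (g x)) (r * sigma).
Proof.
move=> sigma0 normg.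
have := rkhs_eval_bound sdelta_symmetric sdelta_psd [:: (1, x)] normg.
rewrite big_seq1 /= mul1r.
have -> : bform (sdelta sigma) [:: (1, x)] [:: (1, x)] = sigma * sigma.
  by rewrite /bform !big_seq1 /= /sdelta delta_eq // !mul1r mulr1 expr2.
by rewrite sqrt_square.
Qed.

End RegularizedKernel.

Definition reg_gram (X : Type) (k : X -> X -> R) (sigma : R) (t : nat)
    (xs : 'I_t -> X) : 'M[R]_t :=
  Kmat k xs + (sigma ^+ 2)%:M.

Lemma square_le_sum_squares (n : nat) (a : 'I_n -> R) (i : 'I_n) :
  Rle (a i * a i) (\sum_(j < n) a j * a j).
Proof.
rewrite (bigD1 i) //= addRE -[X in Rle X _]Rplus_0_r; apply: Rplus_le_compat_l.
rewrite big_mkcond; apply: sum_ge0 => j; case: (j != i); [exact: Rle_0_sqr | exact: Rle_refl].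
Qed.

Lemma Kmat_quad (X : Type) (k : X -> X -> R) (t : nat) (xs : 'I_t -> X)
    (v : 'rV[R]_t) :
  (v *m Kmat k xs *m v^T) ord0 ord0 =
  \sum_(i < t) \sum_(j < t) v ord0 i * v ord0 j * k (xs i) (xs j).
Proof.
rewrite mxE exchange_big; apply: eq_bigr => j _; rewrite !mxE mulr_suml.
by apply: eq_bigr => i _; rewrite !mxE; ring.
Qed.

(* [K_t + sigma^2 I] is positive definite, hence invertible. *)
Lemma reg_gram_unit (X : Type) (k : X -> X -> R) (sigma : R) (t : nat)
    (xs : 'I_t -> X) :
  is_kernel k -> Rlt 0 sigma -> reg_gram k sigma xs \in unitmx.
Proof.
move=> [_ psdk] sigma_pos; rewrite unitmxE unitfE; apply/negP => /det0P [v vn0 vM].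
apply/negP: vn0; rewrite negbK; apply/eqP/matrixP => i j; rewrite (ord1 i) mxE.
have quad_split : (v *m reg_gram k sigma xs *m v^T) ord0 ord0 =
    \sum_(i < t) \sum_(l < t) v ord0 i * v ord0 l * k (xs i) (xs l) +
    sigma ^+ 2 * \sum_(l < t) v ord0 l * v ord0 l.
  rewrite mulmxDr mul_mx_scalar mulmxDl -scalemxAl [LHS]mxE Kmat_quad mxE.
  congr (_ + _ * _); rewrite mxE.
  by apply: eq_bigr => l _; rewrite !mxE.
have quad0 : (v *m reg_gram k sigma xs *m v^T) ord0 ord0 = 0.
  by rewrite vM mul0mx mxE.
have := psdk t xs (v ord0); have := square_le_sum_squares (v ord0) j.
have sigma2_pos : Rlt 0 (sigma ^+ 2) by rewrite expr2; apply: Rmult_lt_0_compat.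
rewrite quad_split in quad0.
set Q := \sum_(i < t) _ in quad0 *; set S := \sum_(l < t) _ in quad0 *.
have {}quad0 : Rplus Q (Rmult (sigma ^+ 2) S) = R0 := quad0.
move=> vj_le Q0; change (v ord0 j = R0); apply: Rsqr_0_uniq.
have : Rle (Rmult (sigma ^+ 2) S) (Rmult (sigma ^+ 2) 0) by rewrite Rmult_0_r; lra.
move=> /(Rmult_le_reg_l _ _ _ sigma2_pos).
have := Rle_0_sqr (v ord0 j); rewrite /Rsqr; lra.
Qed.

(* Summed posterior quantities at the test points [xh] and the
   combination [v = sum_i k^sigma(xh_i, .) - sum_j w_j k^sigma(x_j, .)]
   whose RKHS norm controls the error of the summed posterior mean. *)
Section PosteriorSums.
Variables (X : Type) (k : X -> X -> R) (sigma : R) (t : nat) (xs : 'I_t -> X)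
          (L : nat) (xh : 'I_L -> X).

Definition test_kvec : 'cV[R]_t := \sum_(i < L) kvec k xs (xh i).

Definition post_weights : 'rV[R]_t := test_kvec^T *m invmx (reg_gram k sigma xs).

Definition explained_var : R :=
  \sum_(j < t) post_weights ord0 j * test_kvec j ord0.

Definition residual_comb : seq (R * X) :=
  [seq (1, xh i) | i <- index_enum 'I_L] ++
  [seq (- post_weights ord0 j, xs j) | j <- index_enum 'I_t].

Lemma sum_post_mean (y : 'cV[R]_t) :
  \sum_(i < L) post_mean k sigma xs y (xh i) =
  \sum_(j < t) post_weights ord0 j * y j ord0.
Proof.
rewrite /post_mean -summxE -!mulmx_suml -raddf_sum mxE.
by apply: eq_bigr => j _; rewrite mxE.
Qed.

Lemma sum_post_cov :
  \sum_(i < L) \sum_(j < L) post_cov k sigma xs (xh i) (xh j) =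
  \sum_(i < L) \sum_(j < L) k (xh i) (xh j) - explained_var.
Proof.
rewrite /post_cov; under eq_bigr do rewrite sumrB.
rewrite sumrB; congr (_ - _).
under eq_bigr do rewrite -summxE -mulmx_sumr.
by rewrite -summxE -!mulmx_suml -raddf_sum mxE.
Qed.

Lemma residual_eval (h : X -> R) :
  \sum_(q <- residual_comb) q.1 * h q.2 =
  \sum_(i < L) h (xh i) - \sum_(j < t) post_weights ord0 j * h (xs j).
Proof.
rewrite big_cat !big_map -sumrN; congr (_ + _).
  by apply: eq_bigr => i _; rewrite mul1r.
by apply: eq_bigr => j _; rewrite mulNr.
Qed.

Hypotheses (kernel_k : is_kernel k) (sigma_pos : Rlt 0 sigma)
           (xs_inj : injective xs) (xh_new : forall i j, xh i <> xs j).

Lemma ksig_train (i j : 'I_t) : ksig k sigma (xs i) (xs j) = reg_gram k sigma xs i j.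
Proof.
rewrite /ksig !mxE; case: (eqVneq i j) => [->|nij]; first by rewrite delta_eq // mulr1.
by rewrite delta_neq ?mulr0 // => /xs_inj eij; rewrite eij eqxx in nij.
Qed.

Lemma ksig_test_train (i : 'I_L) (j : 'I_t) :
  ksig k sigma (xh i) (xs j) = k (xh i) (xs j).
Proof. by rewrite /ksig delta_neq ?mulr0 ?addr0. Qed.

Lemma residual_sqnorm :
  bform (ksig k sigma) residual_comb residual_comb =
  \sum_(i < L) \sum_(j < L) ksig k sigma (xh i) (xh j) - explained_var.
Proof.
rewrite /residual_comb; set test := [seq (1, xh i) | i <- index_enum 'I_L].
set train := [seq (- post_weights ord0 j, xs j) | j <- index_enum 'I_t].
have weightsM : post_weights *m reg_gram k sigma xs = test_kvec^T.
  by rewrite /post_weights mulmxKV // reg_gram_unit.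
have test_kvecE j : test_kvec j ord0 = \sum_(i < L) k (xh i) (xs j).
  by rewrite summxE; apply: eq_bigr => i _; rewrite mxE.
have test_test : bform (ksig k sigma) test test =
    \sum_(i < L) \sum_(j < L) ksig k sigma (xh i) (xh j).
  rewrite /bform big_map; apply: eq_bigr => i _; rewrite big_map.
  by apply: eq_bigr => j _; rewrite /= !mul1r.
have test_train : bform (ksig k sigma) test train = - explained_var.
  rewrite /bform big_map; under eq_bigr do rewrite big_map.
  rewrite exchange_big /explained_var -sumrN; apply: eq_bigr => j _.
  rewrite test_kvecE mulr_sumr -sumrN; apply: eq_bigr => i _.
  by rewrite /= ksig_test_train; ring.
have train_train : bform (ksig k sigma) train train = explained_var.
  rewrite /bform big_map; under eq_bigr do rewrite big_map.
  rewrite exchange_big /explained_var; apply: eq_bigr => j _.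
  have -> : test_kvec j ord0 = (post_weights *m reg_gram k sigma xs) ord0 j.
    by rewrite weightsM mxE.
  rewrite [(post_weights *m _) _ _]mxE mulr_sumr; apply: eq_bigr => i _.
  by rewrite /= ksig_train; ring.
rewrite !bform_catl !bform_catr test_test test_train train_train.
by rewrite (bform_sym _ _ (ksig_symmetric sigma kernel_k)) test_train; ring.
Qed.

Lemma residual_sqnorm_le :
  Rle (bform (ksig k sigma) residual_comb residual_comb)
      (\sum_(i < L) \sum_(j < L) post_cov k sigma xs (xh i) (xh j) +
       L%:R ^+ 2 * sigma ^+ 2).
Proof.
rewrite residual_sqnorm sum_post_cov.
have -> : \sum_(i < L) \sum_(j < L) ksig k sigma (xh i) (xh j) =
    \sum_(i < L) \sum_(j < L) k (xh i) (xh j) +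
    sigma ^+ 2 * \sum_(i < L) \sum_(j < L) delta (xh i) (xh j).
  rewrite mulr_sumr -big_split; apply: eq_bigr => i _.
  by rewrite mulr_sumr -big_split.
have := delta_sum_le xh; have := Rle_0_sqr sigma.
set D := \sum_(i < L) _; set Kk := \sum_(i < L) _.
rewrite !expr2 !addRE !mulRE !oppRE; nra.
Qed.

End PosteriorSums.

Theorem mainTheorem16 (X : Type) (k : X -> X -> R) (sigma : R)
  (f g : X -> R) (t : nat) (xs : 'I_t -> X) (L : nat) (xh : 'I_L -> X)
  (norm_h norm_g : R) :
  is_kernel k ->
  Rlt 0 sigma ->
  in_rkhs k f ->
  rkhs_norm_is (@sdelta X sigma) g norm_g ->
  rkhs_norm_is (ksig k sigma) (fun x => f x + g x) norm_h ->
  injective xs ->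
  (forall (i : 'I_L) (j : 'I_t), xh i <> xs j) ->
  let y := \col_(i < t) (f (xs i) + g (xs i)) in
  Rle (Rabs (\sum_(i < L) post_mean k sigma xs y (xh i) - \sum_(i < L) f (xh i)))
      (norm_h * sqrt (\sum_(i < L) \sum_(j < L) post_cov k sigma xs (xh i) (xh j)
                      + (L%:R) ^+ 2 * sigma ^+ 2)
       + L%:R * norm_g * sigma).
Proof.
move=> kernel_k sigma_pos _ norm_g_is norm_h_is xs_inj xh_new y.
set v := residual_comb k sigma xs xh.
set residual := \sum_(q <- v) q.1 * (f q.2 + g q.2).
set noise := \sum_(i < L) g (xh i).
(* the summed error is the noise at the test points minus the pairing of h with v *)
have -> : Rminus (\sum_(i < L) post_mean k sigma xs y (xh i)) (\sum_(i < L) f (xh i)) =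
          Rplus noise (Ropp residual).
  rewrite /Rminus -!oppRE -!addRE /residual /noise.
  rewrite (residual_eval k sigma xs xh (fun x => f x + g x)) sum_post_mean big_split /=.
  have yE j : y j ord0 = f (xs j) + g (xs j) by rewrite mxE.
  under eq_bigr do rewrite yE.
  ring.
(* |<h, v>| <= ||h|| ||v||, and ||v||^2 is the summed posterior covariance
   up to [L^2 sigma^2] *)
have residual_le : Rle (Rabs residual)
    (norm_h * sqrt (\sum_(i < L) \sum_(j < L) post_cov k sigma xs (xh i) (xh j)
                    + (L%:R) ^+ 2 * sigma ^+ 2)).
  apply: Rle_trans (rkhs_eval_bound (ksig_symmetric sigma kernel_k)
                      (ksig_psd sigma kernel_k) v norm_h_is) _.
  apply: Rmult_le_compat_l (rkhs_norm_ge0 norm_h_is) _.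
  exact/sqrt_le_1_alt/residual_sqnorm_le.
have noise_le : Rle (Rabs noise) (L%:R * norm_g * sigma).
  apply: Rle_trans (Rabs_sum _ _) _; rewrite Rmult_assoc -sum_const_ord.
  by apply: Rle_sum => i; apply: sdelta_eval_bound (Rlt_le _ _ sigma_pos) norm_g_is.
have := Rabs_triang noise (Ropp residual); rewrite Rabs_Ropp; lra.
Qed.
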